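(* Let $p$ be a prime, $K\in\{\mathbb Z_{(p)},\mathbb Z_p\}$, $F$ a field containing $K$, $G=\langle a\rangle\cong C_{p^2}$, $\Phi(x)=x^{p-1}+\dots+x+1$, and for $0\leq i\leq p-2$ let $X_i$ be the $KC_{p^2}$-submodule of $KC_{p^2}$ generated by $(a-1)\Phi(a^p)$ and $\Phi(a)+(a-1)^{i+1}$. Let $T_i:C_{p^2}\to\widehat{X_i}$ be the cocycle with $T_i(a)=p^{-2}\Phi(a)\Phi(a^p)+X_i$. Then $\mathrm{Crys}(C_{p^2};X_i;T_i)$ is torsion-free.
   Context: $FM=F\otimes_KM$, $\widehat M=FM/M$ with $g(x+M)=gx+M$; a $1$-cocycle is $T:G\to\widehat M$ with $T(gh)=gT(h)+T(g)$, determined for cyclic $G$ by $T(a)$ via $T(a^k)=(1+a+\dots+a^{k-1})T(a)$. $\mathrm{Crys}(G;M;T)=\{(g,x):g\in G,\ x\in FM,\ x+M=T(g)\}$ with $(g,x)(g',x')=(gg',g'x+x')$. *)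

From HB Require Import structures.
From mathcomp Require Import all_boot all_order all_algebra.
Set Implicit Arguments. Unset Strict Implicit. Unset Printing Implicit Defensive.
Import Order.TTheory GRing.Theory Num.Theory.
Local Open Scope ring_scope.

(* The ring of p-adic integers Z_p, as the inverse limit of            *)
(* Z/p^(n+1)Z: coherent sequences of canonical residues.               *)
(* (The modulus uses maxn 2 p so the type is sensible for every p;     *)
(*  for a prime p it is exactly p^(n+1).)                              *)
Definition zp_mod (p n : nat) : int := ((maxn 2 p) ^ n.+1)%N%:Z.

Definition Zp (p : nat) :=
  {x : nat -> int | forall n, x n = modz (x n.+1) (zp_mod p n)}.

Lemma zp_mod_mod (p n : nat) (a : int) :
  modz (modz a (zp_mod p n.+1)) (zp_mod p n) = modz a (zp_mod p n).
Proof.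
have -> : zp_mod p n.+1 = zp_mod p n * (maxn 2 p)%:Z.
  by rewrite /zp_mod expnSr PoszM.
rewrite [in RHS](intdiv.divz_eq a (zp_mod p n * (maxn 2 p)%:Z)).
by rewrite [_ * _%:Z]mulrC mulrA modzMDl.
Qed.

Lemma zp_add_proof p (x y : Zp p) n :
  modz (sval x n + sval y n) (zp_mod p n)
   = modz (modz (sval x n.+1 + sval y n.+1) (zp_mod p n.+1)) (zp_mod p n).
Proof.
rewrite zp_mod_mod (proj2_sig x n) (proj2_sig y n).
by rewrite modzDml modzDmr.
Qed.

Lemma zp_mul_proof p (x y : Zp p) n :
  modz (sval x n * sval y n) (zp_mod p n)
   = modz (modz (sval x n.+1 * sval y n.+1) (zp_mod p n.+1)) (zp_mod p n).
Proof.
rewrite zp_mod_mod (proj2_sig x n) (proj2_sig y n).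
by rewrite modzMml modzMmr.
Qed.

Lemma zp_one_proof p n :
  modz 1 (zp_mod p n) = modz (modz 1 (zp_mod p n.+1)) (zp_mod p n).
Proof. by rewrite zp_mod_mod. Qed.

Definition zp_add p (x y : Zp p) : Zp p :=
  exist _ (fun n => modz (sval x n + sval y n) (zp_mod p n)) (zp_add_proof x y).
Definition zp_mul p (x y : Zp p) : Zp p :=
  exist _ (fun n => modz (sval x n * sval y n) (zp_mod p n)) (zp_mul_proof x y).
Definition zp_one p : Zp p :=
  exist _ (fun n => modz 1 (zp_mod p n)) (@zp_one_proof p).

Definition is_Zloc_in (p : nat) (F : fieldType) (K : F -> Prop) : Prop :=
  [pchar F] =i pred0 /\
  (forall x : F, K x <-> exists q : rat, ~~ (p%:Z %| denq q)%Z /\ x = ratr q).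

Definition is_Zpadic_in (p : nat) (F : fieldType) (K : F -> Prop) : Prop :=
  exists phi : Zp p -> F,
    injective phi /\
    (forall x y, phi (zp_add x y) = phi x + phi y) /\
    (forall x y, phi (zp_mul x y) = phi x * phi y) /\
    phi (zp_one p) = 1 /\
    (forall x : F, K x <-> exists z, x = phi z).

(* The group algebra F C_{p^2} = F[X]/(X^{p^2} - 1), a = class of X.   *)
(* Elements are represented by their reduced representatives.          *)
Definition redG (F : fieldType) (p : nat) (q : {poly F}) : {poly F} :=
  modp q ('X^(p ^ 2) - 1).

Definition PhiP (F : fieldType) (p : nat) (y : {poly F}) : {poly F} :=
  \sum_(j < p) y ^+ j.

Definition genX1 (F : fieldType) (p : nat) : {poly F} :=
  ('X - 1) * PhiP p ('X^p).
Definition genX2 (F : fieldType) (p i : nat) : {poly F} :=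
  PhiP p 'X + ('X - 1) ^+ i.+1.

Definition Kpoly (F : fieldType) (K : F -> Prop) (u : {poly F}) : Prop :=
  forall j, K u`_j.

Definition in_Xi (F : fieldType) (K : F -> Prop) (p i : nat) (x : {poly F}) :=
  exists u v : {poly F}, Kpoly K u /\ Kpoly K v /\
    x = redG p (u * genX1 F p + v * genX2 F p i).

Definition in_FXi (F : fieldType) (p i : nat) (x : {poly F}) :=
  exists u v : {poly F}, x = redG p (u * genX1 F p + v * genX2 F p i).

(* representative of T_i(a^k) = (1 + a + ... + a^(k-1)) T_i(a),
   T_i(a) = p^(-2) Phi(a) Phi(a^p) + X_i *)
Definition Trep (F : fieldType) (p k : nat) : {poly F} :=
  redG p ((\sum_(j < k) 'X^j) *
          (((p ^ 2)%N%:R)^-1 *: (PhiP p 'X * PhiP p ('X^p)))).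

(* Crys(C_{p^2}; X_i; T_i): pairs (a^k, x), 0 <= k < p^2, x in F X_i,
   x + X_i = T_i(a^k). *)
Definition in_Crys (F : fieldType) (K : F -> Prop) (p i : nat)
    (c : nat * {poly F}) : Prop :=
  (c.1 < p ^ 2)%N /\ in_FXi p i c.2 /\ in_Xi K p i (c.2 - Trep F p c.1).

Definition crys_mul (F : fieldType) (p : nat) (c d : nat * {poly F}) :
    nat * {poly F} :=
  (((c.1 + d.1) %% (p ^ 2))%N, redG p ('X^(d.1) * c.2) + d.2).

Definition crys_one (F : fieldType) : nat * {poly F} := (0%N, 0).

Definition crys_pow (F : fieldType) (p : nat) (c : nat * {poly F}) (m : nat) :=
  iter m (fun d => crys_mul p d c) (crys_one F).

Definition crys_torsion_free (F : fieldType) (K : F -> Prop) (p i : nat) :=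
  forall c, in_Crys K p i c ->
    forall m : nat, (0 < m)%N -> crys_pow p c m = crys_one F -> c = crys_one F.

From Pilot Require Import Defs.
From HB Require Import structures.
From mathcomp Require Import all_boot all_order all_algebra.
From mathcomp Require Import ring zify.
From Stdlib Require Import FunctionalExtensionality ProofIrrelevance.
Set Implicit Arguments. Unset Strict Implicit. Unset Printing Implicit Defensive.
Import Order.TTheory GRing.Theory Num.Theory.
Local Open Scope ring_scope.

(* If (a^k, x) has finite order m, then m x vanishes modulo a^k - 1 and
   a^(p^2) - 1, so x has augmentation 0.  The element x - T_i(a^k) of X_i has
   augmentation -k, and augmentations of X_i lie in pK, so p | k.  If k = 0
   then x = 0.  Otherwise k = k' p with 0 < k' < p, x is divisible by
   a^p - 1, and modulo a^p - 1 (where T_i(a^k) = k' Phi(a) and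
   Phi(a^p) = p) the coset condition reads
     k' Phi(a) + p u (a - 1) + v (Phi(a) + (a - 1)^(i+1)) = w (a^p - 1)
   with u, v, w over K.  Expanding in powers of a - 1, all coefficients of
   a^p - 1 below degree p lie in pK, and comparing the coefficients of
   (a - 1)^(i+1) gives k' in pK, which is impossible since p is not a unit
   of K. *)

Section PolyCongruence.
Variable F : fieldType.
Implicit Types D f g h : {poly F}.

Definition eqmodp D f g := D %| f - g.

Lemma eqmodp_refl D f : eqmodp D f f.
Proof. by rewrite /eqmodp subrr dvdp0. Qed.

Lemma eqmodp_sym D f g : eqmodp D f g -> eqmodp D g f.
Proof. by rewrite /eqmodp -opprB dvdpNr. Qed.

Lemma eqmodp_trans D f g h : eqmodp D f g -> eqmodp D g h -> eqmodp D f h.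
Proof. by move=> Dfg Dgh; rewrite /eqmodp -(subrKA g); apply: dvdp_add. Qed.

Lemma eqmodpD D f g (f' g' : {poly F}) :
  eqmodp D f g -> eqmodp D f' g' -> eqmodp D (f + f') (g + g').
Proof. by move=> Dfg Dfg'; rewrite /eqmodp opprD addrACA; apply: dvdp_add. Qed.

Lemma eqmodpM D f g (f' g' : {poly F}) :
  eqmodp D f g -> eqmodp D f' g' -> eqmodp D (f * f') (g * g').
Proof.
move=> Dfg Dfg'; rewrite /eqmodp.
have -> : f * f' - g * g' = f * (f' - g') + (f - g) * g' by ring.
exact: dvdp_add (dvdp_mull _ Dfg') (dvdp_mulr _ Dfg).
Qed.

Lemma eqmodpN D f g : eqmodp D f g -> eqmodp D (- f) (- g).
Proof. by rewrite /eqmodp -opprD dvdpNr. Qed.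

Lemma eqmodp_sum D (I : Type) (r : seq I) (P : pred I) (f g : I -> {poly F}) :
  (forall i, P i -> eqmodp D (f i) (g i)) ->
  eqmodp D (\sum_(i <- r | P i) f i) (\sum_(i <- r | P i) g i).
Proof.
move=> fg; apply: (big_ind2 (eqmodp D)) => //.
exact: eqmodp_refl.
exact: eqmodpD.
Qed.

Lemma eqmodp_dvdp D D' f g : D' %| D -> eqmodp D f g -> eqmodp D' f g.
Proof. exact: dvdp_trans. Qed.

Lemma eqmodp0 D f : eqmodp D f 0 = (D %| f).
Proof. by rewrite /eqmodp subr0. Qed.

Lemma eqmodp_XsubC c f : eqmodp ('X - c%:P) f f.[c]%:P.
Proof. by rewrite /eqmodp dvdp_XsubCl /root !hornerE subrr. Qed.

Lemma eqmodp_horner c f g : eqmodp ('X - c%:P) f g -> f.[c] = g.[c].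
Proof. by rewrite /eqmodp dvdp_XsubCl /root !hornerE subr_eq0 => /eqP. Qed.

End PolyCongruence.

Lemma dvdp_XnB1_XmnB1 (F : fieldType) m n :
  ('X^m - 1 : {poly F}) %| 'X^(m * n) - 1.
Proof. by rewrite exprM [_ ^+ n - 1]subrX1 dvdp_mulr. Qed.

Lemma dvdp_XB1_XnB1 (F : fieldType) n : ('X - 1 : {poly F}) %| 'X^n - 1.
Proof. by rewrite -(mul1n n) -{1}(expr1 'X) dvdp_XnB1_XmnB1. Qed.

Lemma horner1_eq0 (F : fieldType) (f : {poly F}) : 'X - 1 %| f -> f.[1] = 0.
Proof. by rewrite -polyC1 dvdp_XsubCl => /rootP. Qed.

Section CyclicGroupAlgebra.
Variables (F : fieldType) (p : nat).
Local Notation Phi := (PhiP p 'X).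
Local Notation M1 := ('X^p - 1 : {poly F}).
Local Notation M2 := ('X^(p ^ 2) - 1 : {poly F}).

Lemma dvdp_XpB1_Xp2B1 : M1 %| M2.
Proof. by rewrite -mulnn dvdp_XnB1_XmnB1. Qed.

Lemma redG_eqmodp (q : {poly F}) : eqmodp M2 (redG p q) q.
Proof.
by apply: eqmodp_sym; rewrite /eqmodp {1}(divp_eq q M2) addrK dvdp_mull.
Qed.

Lemma horner1_redG (q : {poly F}) : (redG p q).[1] = q.[1].
Proof.
apply: eqmodp_horner (eqmodp_dvdp _ (redG_eqmodp q)).
by rewrite polyC1 dvdp_XB1_XnB1.
Qed.

Lemma crys_pow_eqmodp D k x n : D %| M2 -> D %| 'X^k - 1 ->
  eqmodp D (crys_pow p (k, x) n).2 (x *+ n).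
Proof.
move=> DM2 Dk; elim: n => [|n IHn]; first exact: eqmodp_refl.
rewrite /crys_pow iterS -/(crys_pow p (k, x) n) mulrSr.
apply: eqmodpD (eqmodp_refl _ _).
apply: eqmodp_trans (eqmodp_dvdp DM2 (redG_eqmodp _)) (eqmodp_trans _ IHn).
by rewrite /eqmodp -{2}(mul1r (crys_pow p (k, x) n).2) -mulrBl dvdp_mulr.
Qed.

Lemma PhiP_horner1 (y : {poly F}) : y.[1] = 1 -> (PhiP p y).[1] = p%:R.
Proof.
move=> y1; rewrite /PhiP horner_sum.
under eq_bigr do rewrite horner_exp y1 expr1n.
by rewrite sumr_const card_ord.
Qed.

Lemma XpB1_eq : M1 = ('X - 1) * Phi.
Proof. by rewrite subrX1. Qed.

Lemma eqmodp_mulPhi (f : {poly F}) : eqmodp M1 (f * Phi) (f.[1] *: Phi).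
Proof.
rewrite /eqmodp -mul_polyC -mulrBl XpB1_eq dvdp_mul // -polyC1.
exact: eqmodp_XsubC.
Qed.

Lemma PhiXp_eqmodp : eqmodp M1 (PhiP p 'X^p) p%:R.
Proof.
rewrite /PhiP -[p in X in eqmodp _ _ X]card_ord -sumr_const.
by apply: eqmodp_sum => j _; rewrite /eqmodp -exprM dvdp_XnB1_XmnB1.
Qed.

Lemma genX1_eqmodp : eqmodp M1 (genX1 F p) (p%:R *: ('X - 1)).
Proof.
by rewrite scaler_nat -mulr_natr; apply: eqmodpM (eqmodp_refl _ _) PhiXp_eqmodp.
Qed.

Lemma genX1_horner1 : (genX1 F p).[1] = 0.
Proof. by rewrite /genX1 !hornerE subrr mul0r. Qed.

Lemma genX2_horner1 i : (genX2 F p i).[1] = p%:R.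
Proof.
by rewrite /genX2 hornerD PhiP_horner1 ?hornerX // !hornerE subrr expr0n addr0.
Qed.

Local Notation shift f := (f \Po ('X + 1 : {poly F})).

Lemma coef0_shift f : (shift f)`_0 = f.[1].
Proof. by rewrite -horner_coef0 horner_comp !hornerE. Qed.

Lemma shift_XsubC1 : shift ('X - 1) = 'X.
Proof. by rewrite rmorphB /= comp_polyX rmorph1 addrK. Qed.

Lemma shift_XpB1 : shift M1 = ('X + 1) ^+ p - 1.
Proof. by rewrite rmorphB rmorphXn /= comp_polyX rmorph1. Qed.

(* As v(1) = -k', the Phi terms combine into (shift v + k') * shift Phi,
   a multiple of 'X * shift Phi = shift M1. *)
Lemma shift_coset_relation k' u v w i : v.[1] = - k'%:R ->
    k'%:R * Phi + p%:R * (u * ('X - 1)) + v * genX2 F p i = w * M1 ->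
  shift v * 'X^(i.+1) = (shift w - drop_poly 1 (shift v + k'%:R)) * shift M1
                        - p%:R * (shift u * 'X).
Proof.
have shift_Phi : shift M1 = shift Phi * 'X.
  by rewrite XpB1_eq rmorphM /= shift_XsubC1 mulrC.
move=> v1 /(congr1 (comp_poly ('X + 1))); rewrite rmorphM /= shift_Phi.
rewrite /genX2 !(rmorphD, rmorphM, rmorph_nat, rmorphXn) /=.
rewrite comp_polyX rmorphN rmorph1 addrK => shift_eq.
set g := shift v + k'%:R; set q := drop_poly 1 g.
have g_eq : g = q * 'X.
  apply/polyP => -[|j]; rewrite coefMX ?coef_drop_poly ?addn1 //=.
  by rewrite coefD coef0_shift v1 -polyC_natr coefC addNr.
by rewrite mulrBl -shift_eq (mulrCA q) -g_eq /g; ring.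
Qed.

Hypothesis p_neq0 : p%:R != 0 :> F.

Lemma Trep_eqmodp k : eqmodp M1 (Trep F p k) ((k%:R / p%:R) *: Phi).
Proof.
apply: eqmodp_trans (eqmodp_dvdp dvdp_XpB1_Xp2B1 (redG_eqmodp _)) _.
set S := \sum_(j < k) 'X^j; set c := ((p ^ 2)%N%:R : F)^-1.
rewrite -scalerAr mulrA mulrAC scalerAl.
apply: eqmodp_trans (eqmodp_mulPhi _) _.
rewrite hornerZ hornerM PhiP_horner1 ?hornerXn ?expr1n // /S horner_sum.
under eq_bigr do rewrite hornerXn expr1n.
rewrite sumr_const card_ord /c natrX.
have -> : (p%:R ^+ 2)^-1 * (k%:R * p%:R) = k%:R / p%:R :> F by field.
exact: eqmodp_refl.
Qed.

Lemma Trep_horner1 k : (Trep F p k).[1] = k%:R.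
Proof.
rewrite /Trep horner1_redG hornerM hornerZ hornerM horner_sum.
under eq_bigr do rewrite hornerXn expr1n.
rewrite sumr_const card_ord !PhiP_horner1 ?hornerX ?hornerXn ?expr1n //.
by rewrite -natrM mulnn mulVf ?mulr1 // natrX expf_neq0.
Qed.

Lemma crys_coset_dvdp k' x u v i : M1 %| x ->
    x - Trep F p (k' * p) = redG p (u * genX1 F p + v * genX2 F p i) ->
  M1 %| k'%:R * Phi + p%:R * (u * ('X - 1)) + v * genX2 F p i.
Proof.
move=> M1x xT.
have Tk' : eqmodp M1 (Trep F p (k' * p)) (k'%:R *: Phi).
  by rewrite -[k'%:R](mulfK p_neq0) -natrM; apply: Trep_eqmodp.
have lhs : eqmodp M1 (x - Trep F p (k' * p)) (0 - k'%:R *: Phi).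
  by apply: eqmodpD (eqmodpN Tk'); rewrite eqmodp0.
have rhs : eqmodp M1 (x - Trep F p (k' * p))
                    (u * (p%:R *: ('X - 1)) + v * genX2 F p i).
  rewrite xT.
  apply: eqmodp_trans (eqmodp_dvdp dvdp_XpB1_Xp2B1 (redG_eqmodp _)) _.
  exact: eqmodpD (eqmodpM (eqmodp_refl _ _) genX1_eqmodp) (eqmodp_refl _ _).
have := eqmodp_trans (eqmodp_sym lhs) rhs.
by rewrite /eqmodp sub0r -opprD dvdpNr addrA -scalerAr !scaler_nat !mulr_natl.
Qed.

Lemma coset_relation_horner1 k' u v i :
    M1 %| k'%:R * Phi + p%:R * (u * ('X - 1)) + v * genX2 F p i ->
  v.[1] = - k'%:R.
Proof.
move=> /(dvdp_trans (dvdp_XB1_XnB1 F p))/horner1_eq0.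
rewrite !mulr_natl !hornerD !hornerMn (hornerM u) (hornerM v) genX2_horner1.
rewrite PhiP_horner1 ?hornerX // -polyC1 hornerXsubC subrr mulr0 mul0rn addr0.
rewrite -mulr_natl -mulrDl => /eqP.
by rewrite mulf_eq0 (negbTE p_neq0) orbF addrC addr_eq0 => /eqP.
Qed.

Lemma dvdp_crys_pow_eq1 D k x m : D %| M2 -> D %| 'X^k - 1 ->
  m%:R != 0 :> F -> (crys_pow p (k, x) m).2 = 0 -> D %| x.
Proof.
move=> DM2 Dk m_neq0 xm0; have := crys_pow_eqmodp x m DM2 Dk.
by rewrite xm0 /eqmodp sub0r dvdpNr -scaler_nat dvdpZr.
Qed.

Lemma redG_eq0 q : (0 < p)%N -> M2 %| redG p q -> redG p q = 0.
Proof.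
move=> p_gt0 M2r; apply/eqP; apply: contraT => r_neq0.
move: (dvdp_leq r_neq0 M2r); rewrite leqNgt ltn_modp -polyC1 monic_neq0 //.
by rewrite monicXnsubC // expn_gt0 p_gt0.
Qed.

End CyclicGroupAlgebra.

Record p_nonunit_subring (p : nat) (F : fieldType) (K : F -> Prop) : Prop :=
  PNonunitSubring {
    pnus_char0 : [pchar F] =i pred0;
    pnus_1 : K 1;
    pnus_N1 : K (-1);
    pnus_D : forall x y, K x -> K y -> K (x + y);
    pnus_M : forall x y, K x -> K y -> K (x * y);
    pnus_pinv : ~ K p%:R^-1 }.

Section PNonunitSubring.
Variables (F : fieldType) (K : F -> Prop) (p : nat).
Hypotheses (p_prime : prime p) (charF : [pchar F] =i pred0).
Hypotheses (K1 : K 1) (KN1 : K (-1)).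
Hypothesis KD : forall x y, K x -> K y -> K (x + y).
Hypothesis KM : forall x y, K x -> K y -> K (x * y).
Hypothesis K_pinv : ~ K p%:R^-1.

Local Notation Phi := (PhiP p 'X).
Local Notation M1 := ('X^p - 1 : {poly F}).

Let natrF_eq0 n : (n%:R == 0 :> F) = (n == 0)%N.
Proof. exact: (pcharf0P F).1 charF n. Qed.

Let p_neq0 : p%:R != 0 :> F.
Proof. by rewrite natrF_eq0 -lt0n prime_gt0. Qed.

Lemma K0 : K 0.
Proof. by rewrite -(subrr 1); apply: KD. Qed.

Lemma KN x : K x -> K (- x).
Proof. by move=> Kx; rewrite -mulN1r; apply: KM. Qed.

Lemma Knat n : K n%:R.
Proof. by elim: n => [|n IHn]; [exact: K0 | rewrite mulrS; apply: KD]. Qed.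

Lemma Ksum (I : Type) (r : seq I) (P : pred I) (f : I -> F) :
  (forall i, P i -> K (f i)) -> K (\sum_(i <- r | P i) f i).
Proof. by move=> Kf; apply: big_ind; [exact: K0 | exact: KD | exact: Kf]. Qed.

Definition pK (x : F) := exists2 z, K z & x = p%:R * z.

Lemma pK0 : pK 0.
Proof. by exists 0; [exact: K0 | rewrite mulr0]. Qed.

Lemma pKD x y : pK x -> pK y -> pK (x + y).
Proof.
by move=> [a Ka ->] [b Kb ->]; exists (a + b); [apply: KD | rewrite mulrDr].
Qed.

Lemma pKN x : pK x -> pK (- x).
Proof. by move=> [a Ka ->]; exists (- a); [apply: KN | rewrite mulrN]. Qed.

Lemma pKMl a x : K a -> pK x -> pK (a * x).
Proof.
by move=> Ka [b Kb ->]; exists (a * b); [apply: KM | rewrite mulrCA].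
Qed.

Lemma pK_sum (I : Type) (r : seq I) (P : pred I) (f : I -> F) :
  (forall i, P i -> pK (f i)) -> pK (\sum_(i <- r | P i) f i).
Proof.
by move=> pKf; apply: big_ind; [exact: pK0 | exact: pKD | exact: pKf].
Qed.

(* If p does not divide n, a Bezout relation a n + 1 = b p gives
   1/p = b - a (n/p), so n/p in K would make p invertible in K. *)
Lemma pK_natrP n : pK n%:R <-> (p %| n)%N.
Proof.
split=> [[z Kz nz] | /dvdnP[q ->]]; last first.
  by exists q%:R; [exact: Knat | rewrite natrM mulrC].
apply: contraT => p_ndvd_n; case: K_pinv.
have /eqP gcd1 : coprime p n by rewrite prime_coprime.
have [a _] := Bezoutl n (prime_gt0 p_prime).
rewrite gcd1 => /dvdnP[b /(congr1 (GRing.natmul (1 : F)))].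
rewrite natrD natrM nz mulrCA => Bezout_ab.
have -> : p%:R^-1 = b%:R - a%:R * z.
  apply: (mulfI p_neq0).
  by rewrite mulfV // mulrBr mulrC -natrM -Bezout_ab addrK.
by apply: KD; [exact: Knat | apply/KN/KM; [exact: Knat |]].
Qed.

Lemma Kpoly_add f g : Kpoly K f -> Kpoly K g -> Kpoly K (f + g).
Proof. by move=> Kf Kg j; rewrite coefD; apply: KD. Qed.

Lemma Kpoly_opp f : Kpoly K f -> Kpoly K (- f).
Proof. by move=> Kf j; rewrite coefN; apply: KN. Qed.

Lemma Kpoly_mul f g : Kpoly K f -> Kpoly K g -> Kpoly K (f * g).
Proof. by move=> Kf Kg j; rewrite coefM; apply: Ksum => l _; apply: KM. Qed.

Lemma Kpoly_scale c f : K c -> Kpoly K f -> Kpoly K (c *: f).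
Proof. by move=> Kc Kf j; rewrite coefZ; apply: KM. Qed.

Lemma Kpoly_sum (I : Type) (r : seq I) (P : pred I) (f : I -> {poly F}) :
  (forall i, P i -> Kpoly K (f i)) -> Kpoly K (\sum_(i <- r | P i) f i).
Proof. by move=> Kf j; rewrite coef_sum; apply: Ksum => l /Kf. Qed.

Lemma Kpoly_nat n : Kpoly K n%:R.
Proof.
by move=> j; rewrite -polyC_natr coefC; case: eqP => _; [apply: Knat | apply: K0].
Qed.

Lemma Kpoly_Xn n : Kpoly K 'X^n.
Proof. by move=> j; rewrite coefXn; apply: Knat. Qed.

Lemma Kpoly_exp f n : Kpoly K f -> Kpoly K (f ^+ n).
Proof.
move=> Kf; elim: n => [|n IHn]; first exact: (Kpoly_Xn 0).
by rewrite exprS; apply: Kpoly_mul.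
Qed.

Lemma Kpoly_comp f g : Kpoly K f -> Kpoly K g -> Kpoly K (f \Po g).
Proof.
move=> Kf Kg; rewrite comp_polyE; apply: Kpoly_sum => j _.
exact/Kpoly_scale/Kpoly_exp.
Qed.

Lemma Kpoly_horner1 f : Kpoly K f -> K f.[1].
Proof.
by move=> Kf; rewrite horner_coef; apply: Ksum => j _; rewrite expr1n mulr1.
Qed.

Lemma Kpoly_Phi : Kpoly K Phi.
Proof. by apply: Kpoly_sum => j _; apply: Kpoly_Xn. Qed.

(* Multiplying by 1 + X^n + ... + X^(n j) turns w (X^n - 1) into
   w (X^(n (j + 1)) - 1), whose j-th coefficient is - w_j. *)
Lemma Kpoly_divXnB1 w n : (0 < n)%N -> Kpoly K (w * ('X^n - 1)) -> Kpoly K w.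
Proof.
move=> n_gt0 Kw j.
have geo : w * ('X^(n * j.+1) - 1) = w * ('X^n - 1) * \sum_(l < j.+1) 'X^n ^+ l.
  by rewrite exprM subrX1 mulrA.
have := congr1 (fun f : {poly F} => f`_j) geo.
rewrite mulrBr mulr1 coefB coefMXn ifT; last by nia.
rewrite sub0r => /(canRL (@opprK _)) ->.
apply/KN/Kpoly_mul => //; apply: Kpoly_sum => l _; exact/Kpoly_exp/Kpoly_Xn.
Qed.

Lemma pK_horner1_in_Xi i y : in_Xi K p i y -> pK y.[1].
Proof.
move=> [u [v [_ [Kv ->]]]].
rewrite horner1_redG hornerD (hornerM u) (hornerM v).
rewrite genX1_horner1 genX2_horner1 mulr0 add0r mulrC.
by exists v.[1]; first exact: Kpoly_horner1.
Qed.


Local Notation shift f := (f \Po ('X + 1 : {poly F})).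

Lemma Kpoly_shift f : Kpoly K f -> Kpoly K (shift f).
Proof.
by move=> Kf; apply: Kpoly_comp Kf (Kpoly_add (Kpoly_Xn 1) (Kpoly_Xn 0)).
Qed.

Lemma pK_coef_shift_XpB1 j : (j < p)%N -> pK (shift M1)`_j.
Proof.
rewrite shift_XpB1; case: j => [|j] jp.
  by rewrite -horner_coef0 !hornerE expr1n subrr; apply: pK0.
rewrite coefB coef1 subr0 exprD1n coef_sum; apply: pK_sum => l _.
rewrite coefMn coefXn; case: eqP => [<- | _].
  by apply/pK_natrP/prime_dvd_bin.
by rewrite mul0rn; apply: pK0.
Qed.

Lemma pK_coefM_shift_XpB1 f j : Kpoly K f -> (j < p)%N -> pK (f * shift M1)`_j.
Proof.
move=> Kf jp; rewrite coefM; apply: pK_sum => l _; apply: pKMl (Kf l) _.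
by apply: pK_coef_shift_XpB1; apply: leq_ltn_trans jp; apply: leq_subr.
Qed.

Lemma pK_of_coset_relation k' u v i : (i.+1 < p)%N -> Kpoly K u -> Kpoly K v ->
  M1 %| k'%:R * Phi + p%:R * (u * ('X - 1)) + v * genX2 F p i -> pK k'%:R.
Proof.
move=> ip Ku Kv; set R := _ + _ + _ => M1R.
have KXB1 : Kpoly K ('X - 1).
  exact: Kpoly_add (Kpoly_Xn 1) (Kpoly_opp (Kpoly_Xn 0)).
have KR : Kpoly K R.
  apply: Kpoly_add; first apply: Kpoly_add.
  - exact: Kpoly_mul (Kpoly_nat _) Kpoly_Phi.
  - exact: Kpoly_mul (Kpoly_nat _) (Kpoly_mul Ku KXB1).
  - exact: Kpoly_mul Kv (Kpoly_add Kpoly_Phi (Kpoly_exp _ KXB1)).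
have v1 := coset_relation_horner1 p_neq0 M1R.
have Kw : Kpoly K (R %/ M1).
  by apply: (Kpoly_divXnB1 (prime_gt0 p_prime)); rewrite divpK.
have Kq : Kpoly K (drop_poly 1 (shift v + k'%:R)).
  move=> j; rewrite coef_drop_poly.
  exact: (Kpoly_add (Kpoly_shift Kv) (Kpoly_nat _) (j + 1)).
have := shift_coset_relation v1 (esym (divpK M1R)).
move=> /(congr1 (fun f : {poly F} => f`_i.+1)).
rewrite coefMXn ltnn subnn coef0_shift v1 coefB => /(canRL (@opprK _)) ->.
apply/pKN/pKD.
  exact: pK_coefM_shift_XpB1 (Kpoly_add (Kpoly_shift Kw) (Kpoly_opp Kq)) ip.
apply: pKN; rewrite mulr_natl coefMn -mulr_natl.
exists (shift u * 'X)`_i.+1 => //.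
exact: (Kpoly_mul (Kpoly_shift Ku) (Kpoly_Xn 1)).
Qed.

Lemma crys_torsion_free_subring i : (i <= p - 2)%N -> crys_torsion_free K p i.
Proof.
move=> ip [k x] [/= k_lt [[u0 [v0 x_def]] Xrel]] m m_gt0 /(congr1 snd) /= xm0.
have m_neq0 : m%:R != 0 :> F by rewrite natrF_eq0 -lt0n.
have x1 : x.[1] = 0.
  apply/horner1_eq0/(dvdp_crys_pow_eq1 _ _ m_neq0 xm0);
    exact: dvdp_XB1_XnB1.
have /dvdnP[k' k_eq] : (p %| k)%N.
  apply/pK_natrP; rewrite -[k%:R]opprK; apply: pKN.
  have := pK_horner1_in_Xi Xrel.
  by rewrite hornerD hornerN x1 Trep_horner1 // add0r.
have [k'0 | k'_gt0] := posnP k'.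
  have k0 : k = 0%N by rewrite k_eq k'0.
  suff -> : x = 0 by rewrite k0.
  rewrite x_def redG_eq0 ?prime_gt0 // -x_def.
  by apply: (dvdp_crys_pow_eq1 (dvdpp _) _ m_neq0 xm0); rewrite k0 subrr dvdp0.
have [u [v [Ku [Kv xT]]]] := Xrel.
have M1x : M1 %| x.
  apply: (dvdp_crys_pow_eq1 _ _ m_neq0 xm0); first exact: dvdp_XpB1_Xp2B1.
  by rewrite k_eq mulnC dvdp_XnB1_XmnB1.
have /pK_natrP/(dvdn_leq k'_gt0) : pK k'%:R.
  apply: (@pK_of_coset_relation _ _ _ i _ Ku Kv).
    by have := prime_gt1 p_prime; lia.
  by apply: (crys_coset_dvdp p_neq0 M1x); rewrite -k_eq.
by rewrite leqNgt -(ltn_pmul2r (prime_gt0 p_prime)) -k_eq mulnn k_lt.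
Qed.

End PNonunitSubring.

Section LocalizationInField.
Variables (p : nat) (F : fieldType).
Hypotheses (p_prime : prime p) (charF : [pchar F] =i pred0).

Lemma intrF_eq0 (z : int) : (z%:~R == 0 :> F) = (z == 0).
Proof.
case: z => n; first by rewrite -pmulrn ((pcharf0P F).1 charF).
by rewrite NegzE intrN oppr_eq0 -pmulrn ((pcharf0P F).1 charF).
Qed.

Lemma intrF_inj : injective (fun z : int => z%:~R : F).
Proof.
by move=> z w /eqP; rewrite -subr_eq0 -intrB intrF_eq0 subr_eq0 => /eqP.
Qed.

Lemma p_ndvdzM (d1 d2 : int) :
  ~~ (p%:Z %| d1)%Z -> ~~ (p%:Z %| d2)%Z -> ~~ (p%:Z %| d1 * d2)%Z.
Proof. by rewrite !dvdzE abszM Euclid_dvdM // => /negbTE -> /negbTE ->. Qed.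

Definition Zloc_frac (x : F) :=
  exists n d : int, ~~ (p%:Z %| d)%Z /\ x * d%:~R = n%:~R.

Lemma Zloc_fracD x y : Zloc_frac x -> Zloc_frac y -> Zloc_frac (x + y).
Proof.
move=> [n1 [d1 [pd1 e1]]] [n2 [d2 [pd2 e2]]].
exists (n1 * d2 + n2 * d1), (d1 * d2); split; first exact: p_ndvdzM.
by rewrite intrD !intrM -e1 -e2; ring.
Qed.

Lemma Zloc_fracM x y : Zloc_frac x -> Zloc_frac y -> Zloc_frac (x * y).
Proof.
move=> [n1 [d1 [pd1 e1]]] [n2 [d2 [pd2 e2]]].
exists (n1 * n2), (d1 * d2); split; first exact: p_ndvdzM.
by rewrite !intrM -e1 -e2; ring.
Qed.

Lemma Zloc_frac_int (n : int) : Zloc_frac n%:~R.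
Proof.
exists n, 1; split; last by rewrite mulr1.
by rewrite dvdzE /= dvdn1; case: p p_prime => [|[|]].
Qed.

Lemma p_ndvd_denq (q : rat) (n d : int) :
  ~~ (p%:Z %| d)%Z -> q * d%:~R = n%:~R -> ~~ (p%:Z %| denq q)%Z.
Proof.
move=> pd qd; apply: contra pd => /dvdz_trans; apply.
have num_den : numq q * d = n * denq q.
  by apply: (@intr_inj rat); rewrite !intrM numqE -qd; ring.
rewrite -(@Gauss_dvdzl _ _ (numq q)); first by rewrite mulrC num_den dvdz_mull.
by rewrite coprimezE coprime_sym coprime_num_den.
Qed.

Lemma Zloc_fracP (x : F) :
  (exists q : rat, ~~ (p%:Z %| denq q)%Z /\ x = ratr q) <-> Zloc_frac x.
Proof.
have intrF_neq0 (z : int) : z != 0 -> (z%:~R : F) != 0 by rewrite intrF_eq0.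
have denqF_neq0 q : ((denq q)%:~R : F) != 0 by rewrite intrF_neq0 ?denq_neq0.
split=> [[q [pq ->]] | [n [d [pd xd]]]].
  by exists (numq q), (denq q); split; last rewrite /ratr mulfVK.
have d_neq0 : d != 0 by apply: contraNneq pd => ->; rewrite dvdz0.
pose q : rat := n%:~R / d%:~R.
have qd : q * d%:~R = n%:~R by rewrite /q mulfVK // intr_eq0.
exists q; split; first exact: p_ndvd_denq qd.
have num_den : numq q * d = n * denq q.
  by apply: (@intr_inj rat); rewrite !intrM numqE -qd; ring.
apply: (mulIf (intrF_neq0 _ d_neq0)); apply: (mulIf (denqF_neq0 q)).
by rewrite xd /ratr mulrAC mulfVK // -!intrM num_den.
Qed.

End LocalizationInField.

Lemma Zloc_p_nonunit_subring p (F : fieldType) (K : F -> Prop) :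
  prime p -> is_Zloc_in p K -> p_nonunit_subring p K.
Proof.
move=> p_prime [charF K_def].
have KE x : K x <-> Zloc_frac p x by rewrite K_def Zloc_fracP.
split => //.
- by apply/KE; have := Zloc_frac_int F p_prime 1.
- by apply/KE; have := Zloc_frac_int F p_prime (-1); rewrite intrN.
- by move=> x y /KE Kx /KE Ky; apply/KE/Zloc_fracD.
- by move=> x y /KE Kx /KE Ky; apply/KE/Zloc_fracM.
move=> /KE[n [d [pd pd_n]]]; move: pd.
have -> : d = p%:Z * n.
  apply: (intrF_inj charF); rewrite intrM -pd_n mulrA mulfV ?mul1r //.
  by rewrite (intrF_eq0 charF (p%:Z)) -lt0n prime_gt0.
by rewrite dvdz_mulr.
Qed.

Section PadicIntegersInField.
Variable p : nat.
Hypothesis p_prime : prime p.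

Definition Zp_of_int (a : int) : Defs.Zp p :=
  exist (fun x : nat -> int => forall n, x n = modz (x n.+1) (zp_mod p n))
    (fun n => modz a (zp_mod p n)) (fun n => esym (zp_mod_mod p n a)).

Lemma Zp_ext (x y : Defs.Zp p) : (forall n, sval x n = sval y n) -> x = y.
Proof.
case: x y => [f f_coh] [g g_coh] /= /functional_extensionality fg.
by move: g_coh; rewrite -fg => g_coh; congr exist; apply: proof_irrelevance.
Qed.

Lemma Zp_of_intD a b : zp_add (Zp_of_int a) (Zp_of_int b) = Zp_of_int (a + b).
Proof. by apply: Zp_ext => n /=; rewrite modzDml modzDmr. Qed.

Lemma Zp_of_int1 : zp_one p = Zp_of_int 1.
Proof. exact: Zp_ext. Qed.

Lemma zp_mod0 : zp_mod p 0 = p%:Z.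
Proof. by rewrite /zp_mod expn1 (maxn_idPr (prime_gt1 p_prime)). Qed.

Variables (F : fieldType) (phi : Defs.Zp p -> F).
Hypothesis phi_inj : injective phi.
Hypothesis phiD : forall x y, phi (zp_add x y) = phi x + phi y.
Hypothesis phiM : forall x y, phi (zp_mul x y) = phi x * phi y.
Hypothesis phi1 : phi (zp_one p) = 1.

Lemma phi_int0 : phi (Zp_of_int 0) = 0.
Proof.
apply: (addrI (phi (Zp_of_int 0))).
by rewrite -phiD Zp_of_intD !addr0.
Qed.

Lemma phi_nat n : phi (Zp_of_int n%:Z) = n%:R.
Proof.
elim: n => [|n IHn]; first exact: phi_int0.
by rewrite intS addrC -Zp_of_intD phiD IHn -Zp_of_int1 phi1 mulrSr.
Qed.

Lemma phi_intN1 : phi (Zp_of_int (-1)) = -1.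
Proof.
apply/eqP; rewrite -addr_eq0 -phi1 Zp_of_int1 -phiD Zp_of_intD addNr.
by rewrite phi_int0.
Qed.

(* n.+1 is already nonzero modulo (maxn 2 p)^(n.+2), so phi n.+1 <> phi 0. *)
Lemma phi_char0 : [pchar F] =i pred0.
Proof.
apply/(pcharf0P F) => -[|n]; first by rewrite mulr0n !eqxx.
apply/negbTE/eqP; rewrite -phi_nat -phi_int0.
move=> /phi_inj /(congr1 (fun z => sval z n.+1)) /=.
rewrite mod0z modz_small //; apply/andP; split => //.
rewrite /zp_mod ltz_nat; apply: ltn_trans (ltnSn n.+1) (ltn_expl _ _).
exact: leq_trans (leq_maxl 2 p).
Qed.

(* p times any p-adic integer vanishes modulo p, so it is never 1. *)
Lemma phi_neq_pinv z : phi z <> p%:R^-1.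
Proof.
move=> phi_z.
have p_neq0 : (p%:R : F) != 0.
  by rewrite ((pcharf0P F).1 phi_char0) -lt0n prime_gt0.
have : phi (zp_mul (Zp_of_int p%:Z) z) = phi (zp_one p).
  by rewrite phiM phi_nat phi_z mulfV // phi1.
move=> /phi_inj /(congr1 (fun z => sval z 0%N)) /=.
rewrite zp_mod0 modzz mul0r mod0z modz_small //.
by rewrite ltz_nat prime_gt1.
Qed.

End PadicIntegersInField.

Lemma Zpadic_p_nonunit_subring p (F : fieldType) (K : F -> Prop) :
  prime p -> is_Zpadic_in p K -> p_nonunit_subring p K.
Proof.
move=> p_prime [phi [phi_inj [phiD [phiM [phi1 K_def]]]]].
split.
- exact: phi_char0 phi_inj phiD phi1.
- by apply/K_def; exists (zp_one p); rewrite phi1.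
- by apply/K_def; exists (Zp_of_int p (-1)); rewrite phi_intN1.
- by move=> x y /K_def[a ->] /K_def[b ->]; apply/K_def; exists (zp_add a b).
- by move=> x y /K_def[a ->] /K_def[b ->]; apply/K_def; exists (zp_mul a b).
- by move=> /K_def[z /esym]; apply: phi_neq_pinv.
Qed.

Theorem lemma8 (p : nat) (F : fieldType) (K : F -> Prop) (i : nat) :
  prime p ->
  (is_Zloc_in p K \/ is_Zpadic_in p K) ->
  (i <= p - 2)%N ->
  crys_torsion_free K p i.
Proof.
move=> p_prime HK ip.
have [charF K1 KN1 KD KM K_pinv] : p_nonunit_subring p K.
  case: HK; first exact: Zloc_p_nonunit_subring.
  exact: Zpadic_p_nonunit_subring.
exact: crys_torsion_free_subring.
Qed.
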